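(* Let $M$ be a finite rectangular monoid, $k$ a field which is a splitting field for the maximal subgroups of $M$, $X\in\Lambda(M)$, and $A$ a $k[G_X\times G_X^{op}]$-module regarded as an $M$-bimodule via $m\cdot a\cdot m'=\rho_X(m)a\rho_X(m')$. Then $H^1(M,A)\cong H^1(G_X,A)\oplus\mathrm{Hom}_{k[G_X\times G_X^{op}]}(V_{X,X},A)$. In particular, if the characteristic of $k$ does not divide $|G_X|$, then $H^1(M,A)\cong\mathrm{Hom}_{k[G_X\times G_X^{op}]}(V_{X,X},A)$.
   Context: $E(M)$ idempotents, $m^\omega$ idempotent power. $M$ rectangular: each $\{f\in E(M):MfM=MeM\}$ closed under multiplication. $\Lambda(M)$: ideals $MeM$, $e\in E(M)$; $\sigma(m)=Mm^\omega M$; $\sigma(m)\ge X$ means $X\subseteq\sigma(m)$; $\nabla X=\{m:X\not\subseteq MmM\}$. Fixed $e_X$ with $Me_XM=X$, $G_X$ the group of units of $e_XMe_X$, $\rho_X(m)=e_Xme_X$ if $\sigma(m)\ge X$ and $0$ otherwise. $I_X=e_XMe_X\setminus G_X$; $\sim$ is the least equivalence relation on $I_X$ such that $e_Xmne_X\sim e_Xme_Xne_X$ for all $m,n\in M$ with $\sigma(mn)\not\ge X$, and $z\sim z'$ for all $z,z'\in(\nabla X)(\nabla X)\cap I_X$. $V_{X,X}=kI_X/W_X$ where $W_X$ is spanned by $(\nabla X)(\nabla X)\cap I_X$ and all differences $m-n$ with $m\sim n$; it is a $G_X\times G_X^{op}$-module via left and right multiplication. $H^1(M,A)$ (resp. $H^1(G_X,A)$):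 derivations $d$ with $d(mn)=md(n)+d(m)n$ modulo inner derivations $m\mapsto ma-am$. *)

From HB Require Import structures.
From mathcomp Require Import all_boot all_order all_algebra.
From Stdlib Require Import Relations.
Set Implicit Arguments. Unset Strict Implicit. Unset Printing Implicit Defensive.
Import GRing.Theory.

#[short(type="finMonoidType")]
HB.structure Definition FinMonoid := {M of Monoid M & Finite M}.

Local Open Scope group_scope.

Section MonoidNotions.
Variable M : finMonoidType.
Implicit Types (m e f x y : M) (X : {set M}).

Definition idem e : bool := e * e == e.
Definition ideal m : {set M} := [set x * m * y | x : M, y : M].
Definition omega m : M := m ^+ (#|M|`!).
Definition sigma m : {set M} := ideal (omega m).
Definition rectangular : Prop :=
  forall e, idem e -> forall f g, idem f -> idem g ->
    ideal f = ideal e -> ideal g = ideal e -> idem (f * g) /\ ideal (f * g) = ideal e.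
Definition inLambda X : Prop := exists e, idem e /\ X = ideal e.
Definition nabla X : {set M} := [set m | ~~ (X \subset ideal m)].
Definition nabla2 X : {set M} := [set a * b | a in nabla X, b in nabla X].
Definition corner e : {set M} := [set e * m * e | m : M].
Definition units e : {set M} :=
  [set u in corner e | [exists v in corner e, (u * v == e) && (v * u == e)]].
Definition Iset e : {set M} := corner e :\: units e.

Definition sim_gen X e (a b : M) : Prop :=
  a \in Iset e /\ b \in Iset e /\
  ((exists m n, ~~ (X \subset sigma (m * n)) /\ a = e * (m * n) * e /\ b = e * m * e * n * e)
   \/ (a \in nabla2 X /\ b \in nabla2 X)).
(** ~ : least equivalence relation generated (restricted to I_X, where all
    generators live) *)
Definition sim X e : relation M := clos_refl_sym_trans M (sim_gen X e).
End MonoidNotions.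

Local Open Scope ring_scope.

Section Cohomology.
Variables (M : finMonoidType) (k : fieldType) (A : lmodType k).
Variables (X : {set M}) (eX : M) (L R : M -> A -> A).
Local Notation G := (units eX).
Local Notation I := (Iset eX).

(** A is a k[G x G^op]-module: L = left action, R = right action of G *)
Definition GGop_module : Prop :=
  (forall g, g \in G -> forall c a b, L g (c *: a + b) = c *: L g a + L g b) /\
  (forall g, g \in G -> forall c a b, R g (c *: a + b) = c *: R g a + R g b) /\
  (forall a, L eX a = a) /\ (forall a, R eX a = a) /\
  (forall g h, g \in G -> h \in G -> forall a, L (g * h)%g a = L g (L h a)) /\
  (forall g h, g \in G -> h \in G -> forall a, R (g * h)%g a = R h (R g a)) /\
  (forall g h, g \in G -> h \in G -> forall a, L g (R h a) = R h (L g a)).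

Definition lact (m : M) (a : A) : A :=
  if X \subset sigma m then L (eX * m * eX)%g a else 0.
Definition ract (a : A) (m : M) : A :=
  if X \subset sigma m then R (eX * m * eX)%g a else 0.

Definition DerM (d : M -> A) : Prop :=
  forall m n, d (m * n)%g = lact m (d n) + ract (d m) n.
Definition InnM (d : M -> A) : Prop :=
  exists a, forall m, d m = lact m a - ract a m.
(** derivations / inner derivations of G_X (functions supported on G_X) *)
Definition DerG (d : M -> A) : Prop :=
  (forall x, x \notin G -> d x = 0) /\
  (forall g h, g \in G -> h \in G -> d (g * h)%g = L g (d h) + R h (d g)).
Definition InnG (d : M -> A) : Prop :=
  exists a, forall g, d g = if g \in G then L g a - R g a else 0.

(** Hom_{k[G x G^op]}(V_{X,X}, A), V_{X,X} = k I_X / W_X: a k-linear map out of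
    k I_X / W_X is a function on the basis I_X (here: supported on I_X) killing
    the generators of W_X; equivariance for left/right multiplication. *)
Definition HomV (f : M -> A) : Prop :=
  (forall x, x \notin I -> f x = 0) /\
  (forall z, z \in I -> z \in nabla2 X -> f z = 0) /\
  (forall a b, sim X eX a b -> a \in I -> b \in I -> f a = f b) /\
  (forall g z, g \in G -> z \in I ->
      f (g * z)%g = L g (f z) /\ f (z * g)%g = R g (f z)).

(** H^1(M,A) ≅ H^1(G_X,A) ⊕ Hom(V,A), as k-vector spaces: a k-linear map
    Der(M,A) -> Der(G_X,A) x Hom(V,A) inducing a bijection
    Der(M,A)/Inn(M,A) -> Der(G_X,A)/Inn(G_X,A) x Hom(V,A). *)
Definition H1_iso_sum : Prop :=
  exists Phi : (M -> A) -> (M -> A) * (M -> A),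
    (forall c d1 d2, DerM d1 -> DerM d2 -> forall x,
        (Phi (fun m => c *: d1 m + d2 m)).1 x = c *: (Phi d1).1 x + (Phi d2).1 x /\
        (Phi (fun m => c *: d1 m + d2 m)).2 x = c *: (Phi d1).2 x + (Phi d2).2 x) /\
    (forall d, DerM d -> DerG (Phi d).1 /\ HomV (Phi d).2) /\
    (forall d, DerM d -> ((InnG (Phi d).1 /\ forall x, (Phi d).2 x = 0) <-> InnM d)) /\
    (forall d' h, DerG d' -> HomV h ->
       exists d, DerM d /\ InnG (fun x => (Phi d).1 x - d' x) /\
                 forall x, (Phi d).2 x = h x).

Definition H1_iso_Hom : Prop :=
  exists Psi : (M -> A) -> (M -> A),
    (forall c d1 d2, DerM d1 -> DerM d2 -> forall x,
        Psi (fun m => c *: d1 m + d2 m) x = c *: Psi d1 x + Psi d2 x) /\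
    (forall d, DerM d -> HomV (Psi d)) /\
    (forall d, DerM d -> ((forall x, Psi d x = 0) <-> InnM d)) /\
    (forall h, HomV h -> exists d, DerM d /\ forall x, Psi d x = h x).
End Cohomology.

Section Splitting.
Variables (M : finMonoidType) (k : fieldType).

Definition is_rep (e : M) n (rG : M -> 'M[k]_n) : Prop :=
  rG e = 1%:M /\
  forall x y, x \in units e -> y \in units e -> rG (x * y)%g = rG x *m rG y.
Definition rep_irreducible (e : M) n (rG : M -> 'M[k]_n) : Prop :=
  (0 < n)%N /\
  forall m (U : 'M[k]_(m, n)),
    (forall x, x \in units e -> (U *m rG x <= U)%MS) -> U != 0 -> row_full U.
(** enveloping algebra (as in mxrepresentation.v) and absolute irreducibility *)
Definition envelop (e : M) n (rG : M -> 'M[k]_n) : 'M[k]_(#|units e|, n * n) :=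
  \matrix_(i < #|units e|) mxvec (rG (enum_val i)).
Definition rep_abs_irreducible (e : M) n (rG : M -> 'M[k]_n) : Prop :=
  (0 < n)%N /\ row_full (envelop e rG).
Definition splitting_field_maxsubgroups : Prop :=
  forall e : M, idem e -> forall n (rG : M -> 'M[k]_n),
    is_rep e rG -> rep_irreducible e rG -> rep_abs_irreducible e rG.
End Splitting.

(* Rectangularity makes e_X m e_X a unit of e_X M e_X exactly when sigma(m) >= X, and makes
   rho_X multiplicative on such m.  A derivation d of M satisfies d(e m e) = d(m), so it is
   determined by its restrictions to G_X and to I_X: the first is a derivation of G_X, the
   second vanishes on (nabla X)(nabla X), is constant on ~-classes (the generators of ~
   compare d(mn) with d(m) and d(n)) and is G_X-equivariant, i.e. is a homomorphism out of
   V_{X,X}; conversely any such pair glues to a derivation of M.  Inner derivations vanish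
   on I_X and restrict to inner derivations of G_X.  If char k does not divide |G_X|,
   averaging over G_X shows that every derivation of G_X is inner. *)

From mathcomp Require Import all_boot all_order all_algebra.
From Stdlib Require Import Relations.
Set Implicit Arguments. Unset Strict Implicit. Unset Printing Implicit Defensive.
Import GRing.Theory.

Section Ideals.
Local Open Scope group_scope.
Variable M : finMonoidType.
Implicit Types (m n e x y z a b c t u v : M).

Lemma idemE e : idem e -> e * e = e.
Proof. by move/eqP. Qed.

Lemma mem_idealP a b : reflect (exists x y, a = x * b * y) (a \in ideal b).
Proof.
apply: (iffP imset2P) => [[x y _ _ ->]|[x [y ->]]]; first by exists x, y.
by exists x y.
Qed.

Lemma mem_ideal x b y : x * b * y \in ideal b.
Proof. by apply/mem_idealP; exists x, y. Qed.

Lemma ideal_refl m : m \in @ideal M m.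
Proof. by apply/mem_idealP; exists 1, 1; rewrite mul1g mulg1. Qed.

Lemma ideal_sub a b : a \in ideal b -> ideal a \subset ideal b.
Proof.
case/mem_idealP=> x [y ->]; apply/subsetP=> z /mem_idealP [u [v ->]].
by rewrite !mulgA -(mulgA _ y v) mem_ideal.
Qed.

Lemma ideal_trans a b c : a \in ideal b -> b \in ideal c -> a \in ideal c.
Proof. by move=> ab /ideal_sub/subsetP; apply. Qed.

Lemma ideal_eq a b : a \in ideal b -> b \in ideal a -> ideal a = ideal b.
Proof. by move=> ab ba; apply/eqP; rewrite eqEsubset !ideal_sub. Qed.

Lemma ideal_mulr m n : m * n \in ideal m.
Proof. by apply/mem_idealP; exists 1, n; rewrite mul1g. Qed.

Lemma ideal_mull m n : m * n \in ideal n.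
Proof. by apply/mem_idealP; exists m, 1; rewrite mulg1. Qed.

Lemma mem_ideal_expgS e m k : e \in ideal (m ^+ k.+1) -> e \in ideal m.
Proof. by rewrite expgS => /ideal_trans; apply; apply: ideal_mulr. Qed.

Section Corner.
Variable e : M.
Hypothesis ee : idem e.

Lemma cornerP t : reflect (e * t * e = t) (t \in corner e).
Proof.
apply: (iffP imsetP) => [[m _ ->]|<-]; last by exists t.
by rewrite -!mulgA (idemE ee) !mulgA (idemE ee).
Qed.

Lemma mem_corner m : e * m * e \in corner e.
Proof. by apply/imsetP; exists m. Qed.

Lemma idem_corner : e \in corner e.
Proof. by apply/cornerP; rewrite !(idemE ee). Qed.

Lemma corner_mulIl t : t \in corner e -> e * t = t.
Proof. by move/cornerP <-; rewrite !mulgA (idemE ee). Qed.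

Lemma corner_mulIr t : t \in corner e -> t * e = t.
Proof. by move/cornerP <-; rewrite -!mulgA (idemE ee). Qed.

Lemma corner_mul a b : a \in corner e -> b \in corner e -> a * b \in corner e.
Proof.
by move=> ca cb; apply/cornerP; rewrite mulgA (corner_mulIl ca) -mulgA (corner_mulIr cb).
Qed.

(* Left multiplication by b is injective on the finite set eMe, hence onto it. *)
Lemma corner_inv_sym a b :
  a \in corner e -> b \in corner e -> a * b = e -> b * a = e.
Proof.
move=> ca cb ab.
have inj : {in corner e &, injective (fun t => b * t)}.
  move=> t1 t2 c1 c2 /(congr1 (fun t => a * t)).
  by rewrite !mulgA ab (corner_mulIl c1) (corner_mulIl c2).
have onto : [set b * t | t in corner e] = corner e.
  apply/eqP; rewrite eqEcard (card_in_imset inj) leqnn andbT.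
  by apply/subsetP=> _ /imsetP [t ct ->]; apply: corner_mul.
have /imsetP [c cc bc] : e \in [set b * t | t in corner e] by rewrite onto idem_corner.
have -> : a = c by rewrite -(corner_mulIr ca) bc mulgA ab (corner_mulIl cc).
by rewrite bc.
Qed.

Lemma unitsP u :
  reflect (u \in corner e /\ exists2 v, v \in corner e & u * v = e /\ v * u = e)
          (u \in units e).
Proof.
rewrite inE; apply: (iffP andP) => [[cu /existsP [v /and3P [cv /eqP h1 /eqP h2]]]|].
  by split=> //; exists v.
case=> cu [v cv [h1 h2]]; split=> //.
by apply/existsP; exists v; rewrite cv h1 h2 !eqxx.
Qed.

Lemma units_corner u : u \in units e -> u \in corner e.
Proof. by case/unitsP. Qed.

Lemma units_ideal u : u \in units e -> e \in ideal u.
Proof. by case/unitsP=> _ [v _ [<- _]]; apply: ideal_mulr. Qed.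

(* Stability of finite monoids. *)
Lemma corner_units z : z \in corner e -> e \in ideal z -> z \in units e.
Proof.
move=> cz /mem_idealP [x [y exy]].
set x' := e * x * e; set y' := e * y * e.
have cx : x' \in corner e := mem_corner x.
have cy : y' \in corner e := mem_corner y.
have xzy : x' * z * y' = e.
  have -> : x' * z * y' = e * (x * (e * z * e) * y) * e by rewrite /x' /y' !mulgA.
  by move/cornerP: cz => ->; rewrite -exy !(idemE ee).
have h1 : z * y' * x' = e.
  by apply: corner_inv_sym => //; [exact: corner_mul | rewrite mulgA].
have h2 : y' * (x' * z) = e by apply: corner_inv_sym => //; exact: corner_mul.
apply/unitsP; split=> //; exists (y' * x'); first exact: corner_mul.
by rewrite mulgA h1 -mulgA h2.
Qed.

Lemma units_idem u : idem u -> u \in units e -> u = e.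
Proof.
move=> /idemE uu /unitsP [cu [v cv [h1 _]]].
by rewrite -(corner_mulIr cu) -h1 mulgA uu.
Qed.

Lemma units_mul a b : a \in units e -> b \in units e -> a * b \in units e.
Proof.
case/unitsP=> ca [a' ca' [aa' _]]; case/unitsP=> cb [b' cb' [bb' _]].
apply: corner_units; first exact: corner_mul.
apply/mem_idealP; exists 1, (b' * a'); rewrite mul1g.
by rewrite -mulgA (mulgA b) bb' (corner_mulIl ca') aa'.
Qed.

Lemma idem_units : e \in units e.
Proof.
by apply/unitsP; split; [exact: idem_corner | exists e; rewrite ?idem_corner ?(idemE ee)].
Qed.

End Corner.
End Ideals.

Section Rectangular.
Local Open Scope group_scope.
Variable M : finMonoidType.
Hypothesis hrect : rectangular M.
Implicit Types (m n e x y z s t : M).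

Lemma rectangular_band_xyx e x y : idem e -> idem x -> idem y ->
  ideal x = ideal e -> ideal y = ideal e -> x * y * x = x.
Proof.
move=> ee ix iy jx jy.
have [ixy jxy] := hrect ee ix iy jx jy.
have [iw jw] := hrect ee ixy ix jxy jx.
have cw : x * y * x \in corner x.
  by apply/(cornerP ix); rewrite !mulgA (idemE ix) -(mulgA _ x x) (idemE ix).
by apply: (units_idem ix iw); apply: corner_units => //; rewrite jw -jx ideal_refl.
Qed.

Lemma rectangular_band_xyz e x y z : idem e -> idem x -> idem y -> idem z ->
  ideal x = ideal e -> ideal y = ideal e -> ideal z = ideal e -> x * y * z = x * z.
Proof.
move=> ee ix iy iz jx jy jz.
have [ixy jxy] := hrect ee ix iy jx jy.
have [iw jw] := hrect ee ixy iz jxy jz.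
have [ixz jxz] := hrect ee ix iz jx jz.
have -> : x * y * z = (x * z * x) * y * (z * x * z).
  by rewrite (rectangular_band_xyx ee ix iz) // (rectangular_band_xyx ee iz ix).
have -> : x * z * x * y * (z * x * z) = (x * z) * (x * y * z) * (x * z) by rewrite !mulgA.
exact: (rectangular_band_xyx ee ixz iw jxz jw).
Qed.

Variable e : M.
Hypothesis ee : idem e.

(* Sandwiching the two factorisations of e gives J-equivalent idempotents f1 and f2,
   whose product rectangularity keeps in the J-class of e. *)
Lemma idem_mem_idealM s t : (e \in ideal (s * t)) = (e \in ideal s) && (e \in ideal t).
Proof.
apply/idP/andP => [h|[/mem_idealP [x [y exy]] /mem_idealP [u [v euv]]]].
  by split; apply: ideal_trans h _; [apply: ideal_mulr | apply: ideal_mull].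
have E := idemE ee.
set f1 := y * e * x * s; set f2 := t * v * e * u.
have i1 : idem f1.
  apply/eqP; rewrite /f1.
  have -> : y * e * x * s * (y * e * x * s) = y * (e * (x * s * y) * e) * x * s
    by rewrite !mulgA.
  by rewrite -exy E E.
have i2 : idem f2.
  apply/eqP; rewrite /f2.
  have -> : t * v * e * u * (t * v * e * u) = t * v * (e * (u * t * v) * e) * u
    by rewrite !mulgA.
  by rewrite -euv E E.
have j1 : ideal f1 = ideal e.
  apply: ideal_eq; first by apply/mem_idealP; exists y, (x * s); rewrite /f1 ?mulgA.
  apply/mem_idealP; exists (x * s), y.
  have -> : x * s * f1 * y = (x * s * y) * e * (x * s * y) by rewrite /f1 ?mulgA.
  by rewrite -exy !E.
have j2 : ideal f2 = ideal e.
  apply: ideal_eq; first by apply/mem_idealP; exists (t * v), u; rewrite /f2 ?mulgA.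
  apply/mem_idealP; exists u, (t * v).
  have -> : u * f2 * (t * v) = (u * t * v) * e * (u * t * v) by rewrite /f2 ?mulgA.
  by rewrite -euv !E.
have [_ j12] := hrect ee i1 i2 j1 j2.
have : e \in ideal (f1 * f2) by rewrite j12 ideal_refl.
move/ideal_trans; apply; apply/mem_idealP; exists (y * e * x), (v * e * u).
by rewrite /f1 /f2 !mulgA.
Qed.

Lemma idem_mem_ideal_expg m k : e \in ideal m -> e \in ideal (m ^+ k).
Proof.
move=> em; elim: k => [|k IH].
  by rewrite expg0; apply/mem_idealP; exists e, 1; rewrite !mulg1.
by rewrite expgS idem_mem_idealM em.
Qed.

Lemma sigma_geE m : (ideal e \subset sigma m) = (e \in ideal m).
Proof.
apply/idP/idP => [/subsetP/(_ e (ideal_refl e))|em].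
  by rewrite /sigma /omega -(prednK (fact_gt0 #|M|)) => /mem_ideal_expgS.
by apply: ideal_sub; apply: idem_mem_ideal_expg.
Qed.

Lemma corner_unitsE m : (e * m * e \in units e) = (e \in ideal m).
Proof.
apply/idP/idP => [/units_ideal h|h]; first by apply: ideal_trans h (mem_ideal e m e).
by apply: corner_units => //; rewrite ?mem_corner // !idem_mem_idealM h ideal_refl.
Qed.

(* rho_X is multiplicative on {m | sigma(m) >= X}: with g = eme, h = ene and g', h'
   their inverses in G_e, the idempotents g'm, e, nh' lie in the J-class of e, so the
   rectangular band law lets us delete the middle e from g'm * e * nh'. *)
Lemma rho_mul m n : e \in ideal m -> e \in ideal n ->
  e * (m * n) * e = (e * m * e) * (e * n * e).
Proof.
rewrite -!corner_unitsE => /unitsP [cg [g' cg' [gg' g'g]]] /unitsP [ch [h' ch' [hh' h'h]]].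
set g := e * m * e in cg gg' g'g *; set h := e * n * e in ch hh' h'h *.
have g'm_e : g' * m * e = g' * g by rewrite /g !mulgA (corner_mulIr ee cg').
have e_nh' : e * (n * h') = h * h' by rewrite /h -!mulgA (corner_mulIl ee ch').
have i1 : idem (g' * m).
  apply/eqP; have -> : g' * m * (g' * m) = g' * m * e * (g' * m).
    by rewrite -(mulgA _ e) (mulgA e) (corner_mulIl ee cg').
  by rewrite g'm_e g'g mulgA (corner_mulIl ee cg').
have i2 : idem (n * h').
  apply/eqP; have -> : n * h' * (n * h') = n * h' * (e * (n * h')).
    by rewrite [RHS]mulgA -(mulgA n h' e) (corner_mulIr ee ch').
  by rewrite e_nh' mulgA -(mulgA n) h'h -mulgA (corner_mulIl ee ch').
have j1 : ideal (g' * m) = ideal e.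
  apply: ideal_eq; last by apply/mem_idealP; exists 1, e; rewrite mul1g g'm_e g'g.
  by apply/mem_idealP; exists g', m; rewrite (corner_mulIr ee cg').
have j2 : ideal (n * h') = ideal e.
  apply: ideal_eq; last by apply/mem_idealP; exists e, 1; rewrite mulg1 e_nh' hh'.
  by apply/mem_idealP; exists n, h'; rewrite -mulgA (corner_mulIl ee ch').
have band := rectangular_band_xyz ee i1 ee i2 j1 (erefl _) j2.
have := congr1 (fun w => g * w * h) band.
have -> : g * (g' * m * e * (n * h')) * h = (g * g') * m * e * n * (h' * h) by rewrite !mulgA.
have -> : g * (g' * m * (n * h')) * h = (g * g') * m * n * (h' * h) by rewrite !mulgA.
rewrite gg' h'h /g /h => E.
by rewrite !mulgA -(mulgA _ e e) (idemE ee) -E.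
Qed.

End Rectangular.

Section Cohomology.
Variables (M : finMonoidType) (k : fieldType) (A : lmodType k).
Variables (X : {set M}) (e : M) (L R : M -> A -> A).
Hypothesis hrect : rectangular M.
Hypothesis ee : idem e.
Hypothesis hX : X = ideal e.
Hypothesis hA : GGop_module e L R.

Local Notation G := (units e).
Local Notation I := (Iset e).
Local Open Scope ring_scope.
Local Open Scope group_scope.

Section ModuleFacts.
Variable g : M.
Hypothesis hg : g \in G.

Lemma LD a b : L g (a + b) = L g a + L g b.
Proof. by case: hA => hL _; rewrite -[a]scale1r hL // !scale1r. Qed.

Lemma RD a b : R g (a + b) = R g a + R g b.
Proof. by case: hA => _ [hR _]; rewrite -[a]scale1r hR // !scale1r. Qed.

Lemma L0 : L g 0 = 0.
Proof. by apply: (addrI (L g 0)); rewrite -LD !addr0. Qed.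

Lemma R0 : R g 0 = 0.
Proof. by apply: (addrI (R g 0)); rewrite -RD !addr0. Qed.

Lemma LZ c a : L g (c *: a) = c *: L g a.
Proof. by case: hA => hL _; have := hL g hg c a 0; rewrite !addr0 L0 addr0. Qed.

Lemma RZ c a : R g (c *: a) = c *: R g a.
Proof. by case: hA => _ [hR _]; have := hR g hg c a 0; rewrite !addr0 R0 addr0. Qed.

End ModuleFacts.

Lemma Le a : L e a = a. Proof. by case: hA => _ [_ [-> _]]. Qed.
Lemma Re a : R e a = a. Proof. by case: hA => _ [_ [_ [-> _]]]. Qed.

Lemma RM g h a : g \in G -> h \in G -> R (g * h) a = R h (R g a).
Proof. by move=> hg hh; case: hA => _ [_ [_ [_ [_ [hRM _]]]]]; apply: hRM. Qed.

Lemma LRC g h a : g \in G -> h \in G -> L g (R h a) = R h (L g a).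
Proof. by move=> hg hh; case: hA => _ [_ [_ [_ [_ [_ hLR]]]]]; apply: hLR. Qed.

(* [geX m] encodes sigma(m) >= X, see [sigma_geX]. *)
Definition geX (m : M) : bool := e * m * e \in G.

Lemma sigma_geX m : (X \subset sigma m) = geX m.
Proof. by rewrite hX sigma_geE // /geX corner_unitsE. Qed.

Lemma geXM m n : geX (m * n) = geX m && geX n.
Proof. by rewrite /geX !corner_unitsE // idem_mem_idealM. Qed.

Lemma units_cornerK g : g \in G -> e * g * e = g.
Proof. by move=> hg; apply/(cornerP ee); apply: units_corner. Qed.

Lemma geX_units g : g \in G -> geX g.
Proof. by move=> hg; rewrite /geX units_cornerK. Qed.

Lemma rhoM m n : geX m -> geX n -> e * (m * n) * e = (e * m * e) * (e * n * e).
Proof. by rewrite /geX !corner_unitsE // => hm hn; apply: rho_mul. Qed.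

Lemma inI z : (z \in I) = (z \in corner e) && (z \notin G).
Proof. by rewrite inE andbC. Qed.

Lemma I_corner z : z \in I -> z \in corner e.
Proof. by rewrite inI => /andP []. Qed.

Lemma I_geXF z : z \in I -> ~~ geX z.
Proof. by rewrite inI /geX => /andP [/(cornerP ee) ->]. Qed.

Lemma geXF_I m : ~~ geX m -> e * m * e \in I.
Proof. by rewrite inI mem_corner. Qed.

Lemma I_nabla z : z \in I -> z \in nabla X.
Proof.
rewrite inI => /andP [cz]; apply: contraNT; rewrite inE hX negbK.
by move=> /subsetP/(_ e (ideal_refl e)); apply: corner_units.
Qed.

Lemma nabla_geXF a : a \in nabla X -> ~~ geX a.
Proof. by rewrite inE /geX corner_unitsE // hX; apply: contra; apply: ideal_sub. Qed.

Lemma unitsI_mul g z : g \in G -> z \in I -> g * z \in I.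
Proof.
move=> hg; rewrite !inI => /andP [cz]; rewrite (corner_mul ee (units_corner hg) cz) /=.
apply: contra => ugz; apply: corner_units => //.
exact: ideal_trans (units_ideal ugz) (ideal_mull _ _).
Qed.

Lemma Iunits_mul g z : g \in G -> z \in I -> z * g \in I.
Proof.
move=> hg; rewrite !inI => /andP [cz]; rewrite (corner_mul ee cz (units_corner hg)) /=.
apply: contra => uzg; apply: corner_units => //.
exact: ideal_trans (units_ideal uzg) (ideal_mulr _ _).
Qed.

Lemma lactE m a : lact X e L m a = if geX m then L (e * m * e) a else 0.
Proof. by rewrite /lact sigma_geX. Qed.

Lemma ractE m a : ract X e R a m = if geX m then R (e * m * e) a else 0.
Proof. by rewrite /ract sigma_geX. Qed.

Lemma lact0 m : lact X e L m 0 = 0.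
Proof. by rewrite lactE; case: ifP => // /L0. Qed.

Lemma ract0 m : ract X e R 0 m = 0.
Proof. by rewrite ractE; case: ifP => // /R0. Qed.

Lemma lact_units g a : g \in G -> lact X e L g a = L g a.
Proof. by move=> hg; rewrite lactE geX_units // units_cornerK. Qed.

Lemma ract_units g a : g \in G -> ract X e R a g = R g a.
Proof. by move=> hg; rewrite ractE geX_units // units_cornerK. Qed.

Lemma lactF m a : ~~ geX m -> lact X e L m a = 0.
Proof. by rewrite lactE => /negbTE ->. Qed.

Lemma ractF m a : ~~ geX m -> ract X e R a m = 0.
Proof. by rewrite ractE => /negbTE ->. Qed.

Section Derivation.
Variable d : M -> A.
Hypothesis hd : DerM X e L R d.

Lemma der_idem : d e = 0.
Proof.
have := hd e e; rewrite (idemE ee) lact_units ?ract_units ?idem_units // Le Re.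
by move/(congr1 (fun t => t - d e)); rewrite subrr addrK.
Qed.

Lemma der_mulIl m : d (e * m) = d m.
Proof. by rewrite hd der_idem ract0 lact_units ?idem_units // Le addr0. Qed.

Lemma der_mulIr m : d (m * e) = d m.
Proof. by rewrite hd der_idem lact0 ract_units ?idem_units // Re add0r. Qed.

Lemma der_corner m : d (e * m * e) = d m.
Proof. by rewrite der_mulIr der_mulIl. Qed.

Lemma der_nabla2 z : z \in nabla2 X -> d z = 0.
Proof. by case/imset2P=> a b ha hb ->; rewrite hd lactF ?ractF ?nabla_geXF // addr0. Qed.

(* On the generators e(mn)e ~ (eme)(ene) of ~, both sides have value d(mn):
   the term ract (d m) (en) of d(m(en)) equals ract (d m) n. *)
Lemma der_sim a b : sim X e a b -> d a = d b.
Proof.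
elim=> {a b} [a b [_ [_ [[m [n [_ [-> ->]]]]|[ha hb]]]]|//|a b _ ->//|a b c _ -> _ ->//].
  have -> : e * m * e * n * e = e * (m * (e * n)) * e by rewrite !mulgA.
  rewrite !der_corner (hd m (e * n)) der_mulIl (hd m n) (ractE (e * n)) (ractE n).
  by rewrite geXM (geX_units (idem_units ee)) /= !mulgA (idemE ee).
by rewrite !der_nabla2.
Qed.

End Derivation.

(* The components of H^1(M, A) -> H^1(G_X, A) x Hom(V_{X,X}, A) are [restr G], [restr I]. *)
Definition restr (S : {set M}) (d : M -> A) (x : M) : A := if x \in S then d x else 0.

Lemma restr_linear (S : {set M}) c (d1 d2 : M -> A) x :
  restr S (fun m => c *: d1 m + d2 m) x = c *: restr S d1 x + restr S d2 x.
Proof. by rewrite /restr; case: (x \in S); rewrite // scaler0 addr0. Qed.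

Lemma DerG_restr d : DerM X e L R d -> DerG e L R (restr G d).
Proof.
move=> hd; split=> [x /negbTE hx|g h hg hh]; first by rewrite /restr hx.
by rewrite /restr hg hh units_mul // hd lact_units // ract_units.
Qed.

Lemma HomV_restr d : DerM X e L R d -> HomV X e L R (restr I d).
Proof.
move=> hd; split=> [x /negbTE hx|]; first by rewrite /restr hx.
split=> [z hz hn|]; first by rewrite /restr hz der_nabla2.
split=> [a b hs ha hb|g z hg hz]; first by rewrite /restr ha hb (der_sim hd hs).
rewrite /restr unitsI_mul // Iunits_mul // hz !hd (lact_units _ hg) (ract_units _ hg).
by rewrite (ractF _ (I_geXF hz)) (lactF _ (I_geXF hz)) addr0 add0r.
Qed.

Lemma restr_inner d : DerM X e L R d ->
  ((InnG e L R (restr G d) /\ forall x, restr I d x = 0) <-> InnM X e L R d).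
Proof.
move=> hd; split=> [[[a ha] hI]|[a ha]].
  exists a => m; rewrite -(der_corner hd) lactE ractE.
  case gm: (geX m); first by have := ha (e * m * e); rewrite /restr -/(geX m) gm.
  by have := hI (e * m * e); rewrite /restr geXF_I ?gm // => ->; rewrite subrr.
split=> [|x]; first by exists a => g; rewrite /restr; case: ifP => hg;
  rewrite // ha lact_units // ract_units.
by rewrite /restr; case: ifP => hx; rewrite // ha lactF ?ractF ?I_geXF // subrr.
Qed.

Lemma sim_rho m n : ~~ geX (m * n) -> sim X e (e * (m * n) * e) (e * m * e * (e * n * e)).
Proof.
move=> hmn.
have -> : e * m * e * (e * n * e) = e * m * e * n * e.
  by rewrite !mulgA -(mulgA _ e e) (idemE ee).
apply: rst_step; split; first exact: geXF_I.
split; last by left; exists m, n; rewrite sigma_geX.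
have -> : e * m * e * n * e = e * (m * e * n) * e by rewrite !mulgA.
by apply: geXF_I; rewrite !geXM (geX_units (idem_units ee)) andbT -geXM.
Qed.

Lemma rhoI m n : ~~ geX (m * n) -> e * m * e * (e * n * e) \in I.
Proof.
move=> hmn; have -> : e * m * e * (e * n * e) = e * (m * e * n) * e.
  by rewrite !mulgA -(mulgA _ e e) (idemE ee).
by apply: geXF_I; rewrite !geXM (geX_units (idem_units ee)) andbT -geXM.
Qed.

(* The preimage of (d', h) glues d' on {m | sigma(m) >= X} and h elsewhere, via m |-> eme. *)
Lemma restr_surj d' h : DerG e L R d' -> HomV X e L R h ->
  exists d, DerM X e L R d /\ InnG e L R (fun x => restr G d x - d' x) /\
            forall x, restr I d x = h x.
Proof.
case=> d'0 d'M [h0 [hnabla [hsim hequiv]]].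
pose d m := if geX m then d' (e * m * e) else h (e * m * e).
have hrho m n : ~~ geX (m * n) -> h (e * (m * n) * e) = h (e * m * e * (e * n * e)).
  by move=> hmn; apply: hsim; [apply: sim_rho | apply: geXF_I | apply: rhoI].
exists d; split.
  move=> m n; rewrite /d lactE ractE geXM.
  case gm: (geX m); case gn: (geX n) => /=.
  - by rewrite rhoM // d'M.
  - rewrite hrho ?geXM ?gm ?gn // addr0.
    by case: (hequiv (e * m * e) (e * n * e) gm (geXF_I (negbT gn))).
  - rewrite hrho ?geXM ?gm ?gn // add0r.
    by case: (hequiv (e * n * e) (e * m * e) gn (geXF_I (negbT gm))).
  - rewrite hrho ?geXM ?gm // addr0 hnabla //; first by apply: rhoI; rewrite geXM gm.
    by apply/imset2P; exists (e * m * e) (e * n * e); rewrite // I_nabla // geXF_I ?gm ?gn.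
split.
  exists 0 => g; rewrite /restr; case: ifP => hg; last by rewrite d'0 ?hg // subrr.
  by rewrite /d geX_units // units_cornerK // subrr L0 // R0 // subrr.
move=> x; rewrite /restr; case: ifP => hx; last by rewrite h0 ?hx.
by rewrite /d (negbTE (I_geXF hx)); move/(cornerP ee): (I_corner hx) => ->.
Qed.

Definition unit_inv (g : M) : M :=
  odflt e [pick v in corner e | (g * v == e) && (v * g == e)].

Lemma unit_invP g : g \in G ->
  [/\ unit_inv g \in corner e, g * unit_inv g = e & unit_inv g * g = e].
Proof.
move=> hg; rewrite /unit_inv; case: pickP => [v /and3P [cv /eqP h1 /eqP h2] //|none].
case/unitsP: hg => _ [v cv [h1 h2]].
by have := none v; rewrite cv h1 h2 !eqxx.
Qed.

Lemma unit_inv_units g : g \in G -> unit_inv g \in G.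
Proof.
move=> hg; have [ci gi ig] := unit_invP hg.
by apply/unitsP; split=> //; exists g; rewrite ?units_corner.
Qed.

Lemma unit_invM g h : g \in G -> h \in G -> unit_inv (g * h) = unit_inv h * unit_inv g.
Proof.
move=> hg hh; have [cg gg' _] := unit_invP hg; have [ch hh' _] := unit_invP hh.
have [ci _ igh] := unit_invP (units_mul ee hg hh).
have e_gh : g * h * (unit_inv h * unit_inv g) = e.
  by rewrite mulgA -(mulgA g h) hh' (corner_mulIr ee (units_corner hg)) gg'.
by rewrite -[LHS](corner_mulIr ee ci) -e_gh mulgA igh (corner_mulIl ee (corner_mul ee ch cg)).
Qed.

Lemma sum_units_mull (F : M -> A) g : g \in G ->
  \sum_(h in G) F h = \sum_(h in G) F (g * h)%g.
Proof.
move=> hg; have [_ _ ig] := unit_invP hg.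
have inj : {in G &, injective (fun h => g * h)}.
  move=> h1 h2 u1 u2 /(congr1 (fun t => unit_inv g * t)).
  by rewrite !mulgA ig !(corner_mulIl ee) // units_corner.
rewrite -(big_imset _ inj); apply: eq_bigl => x.
suff -> : [set g * h | h in G] = G by [].
apply/eqP; rewrite eqEcard (card_in_imset inj) leqnn andbT.
by apply/subsetP => _ /imsetP [h hh ->]; apply: units_mul.
Qed.

(* Averaging: a = -|G|^-1 sum_h h^-1 . d(h) satisfies d(g) = g.a - a.g. *)
Lemma DerG_inner d : (#|G|%:R : k) != 0 -> DerG e L R d -> InnG e L R d.
Proof.
move=> hn [d0 dM].
pose S := \sum_(h in G) R (unit_inv h) (d h).
have LS g : g \in G -> L g S = \sum_(h in G) (R (unit_inv h) (d (g * h)%g) - d g).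
  move=> hg; rewrite (big_morph _ (LD hg) (L0 hg)); apply: eq_bigr => h hh.
  have [_ hi _] := unit_invP hh.
  have hi' := unit_inv_units hh.
  by rewrite LRC // dM // RD // -RM // hi Re addrK.
have RS g : g \in G -> R g S = \sum_(h in G) R (unit_inv h) (d (g * h)%g).
  move=> hg; rewrite (big_morph _ (RD hg) (R0 hg)) [LHS](sum_units_mull _ hg).
  apply: eq_bigr => h hh; have [ch _ _] := unit_invP hh; have [_ _ ig] := unit_invP hg.
  rewrite -RM ?unit_inv_units ?units_mul // unit_invM // -mulgA ig.
  by rewrite (corner_mulIr ee ch).
exists (- (#|G|%:R)^-1 *: S) => g; case: ifP => hg; last by rewrite d0 ?hg.
rewrite LZ // RZ // -scalerBr LS // RS // sumrB sumr_const addrC addKr.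
by rewrite -scaler_nat scaleNr scalerN opprK scalerA mulVf // scale1r.
Qed.

Lemma natr_card_units_neq0 :
  (forall p, p \in [pchar k]%R -> ~~ (p %| #|G|)%N) -> (#|G|%:R : k) != 0.
Proof.
move=> hp; apply: contraT; rewrite negbK => h0.
have gt0 : (0 < #|G|)%N by apply/card_gt0P; exists e; apply: idem_units.
have [p hpc] := natf0_pchar gt0 h0.
by have := hp p hpc; rewrite (dvdn_pcharf hpc) h0.
Qed.

End Cohomology.

Theorem mainTheorem15 (M : finMonoidType) (k : fieldType)
  (hrect : rectangular M)
  (hsplit : splitting_field_maxsubgroups M k)
  (X : {set M}) (eX : M) (heX : idem eX) (hX : X = ideal eX)
  (A : lmodType k) (L R : M -> A -> A) (hA : GGop_module eX L R) :
  H1_iso_sum X eX L R /\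
  ((forall p, p \in [pchar k]%R -> ~~ (p %| #|units eX|)%N) -> H1_iso_Hom X eX L R).
Proof.
have DerG_restrX := DerG_restr hrect heX hX (L := L) (R := R).
have HomV_restrX := HomV_restr hrect heX hX hA.
have restr_innerX := restr_inner hrect heX hX hA.
have restr_surjX := restr_surj hrect heX hX hA.
split.
  exists (fun d => (restr (units eX) d, restr (Iset eX) d)).
  split=> [c d1 d2 _ _ x|]; first by rewrite /= !restr_linear.
  split=> [d hd|]; first by split; [apply: DerG_restrX | apply: HomV_restrX].
  by split=> [d hd|d' h]; [apply: restr_innerX | apply: restr_surjX].
move=> hp; exists (restr (Iset eX)).
split=> [c d1 d2 _ _ x|]; first exact: restr_linear.
split=> [d hd|]; first exact: HomV_restrX.
split=> [d hd|h hh].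
  have [ker_sub ker_sup] := restr_innerX d hd.
  split=> [hI|/ker_sup [] //]; apply: ker_sub; split=> //.
  exact: DerG_inner heX hA _ (natr_card_units_neq0 heX hp) (DerG_restrX d hd).
have d0 : DerG eX L R (fun _ => 0%R).
  by split=> // g g' hg hg'; rewrite (L0 hA hg) (R0 hA hg') addr0.
by have [d [hd [_ hdh]]] := restr_surjX _ _ d0 hh; exists d.
Qed.
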